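(* Fix a two-receiver discrete memoryless broadcast channel $p(y,z|x)$ with finite alphabets. Let $\mathcal{C}$ be the set of rate pairs $(R_1,R_2)$ such that there exist discrete random variables $U,V,X,Y,Z$ with joint distribution $p(u,v)p(x|u,v)p(y,z|x)$ satisfying $R_1\le I(U;Y)$, $R_2\le I(V;Z)$, $R_1+R_2\le I(U;Y)+I(V;Z|U)$, $R_1+R_2\le I(V;Z)+I(U;Y|V)$. Let $\mathcal{C}_d$ be the set defined in the same way but with the additional restriction that $X$ is a deterministic function of $(U,V)$, i.e. $P(X=x|U=u,V=v)\in\{0,1\}$ for all $(u,v,x)$. Then $\mathcal{C}=\mathcal{C}_d$.
   Context: $p(y,z|x)$ is the channel transition probability from input alphabet $\mathcal{X}$ to outputs $\mathcal{Y}\times\mathcal{Z}$; $(Y,Z)$ are obtained from $X$ through the channel, so $(U,V)\to X\to (Y,Z)$ is a Markov chain. *)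

From mathcomp Require Import all_boot all_order all_algebra.
From mathcomp Require Import reals exp.
Set Implicit Arguments. Unset Strict Implicit. Unset Printing Implicit Defensive.
Import Order.TTheory GRing.Theory Num.Theory.
Local Open Scope ring_scope.

Section InfoTheory.
Variable R : realType.

Definition is_bc_channel (X Y Z : finType) (W : X -> Y -> Z -> R) : Prop :=
  (forall x y z, 0 <= W x y z) /\ (forall x, \sum_(y : Y) \sum_(z : Z) W x y z = 1).

Definition is_pmf2 (U V : finType) (p : U -> V -> R) : Prop :=
  (forall u v, 0 <= p u v) /\ \sum_(u : U) \sum_(v : V) p u v = 1.

Definition is_cond_pmf (U V X : finType) (q : U -> V -> X -> R) : Prop :=
  (forall u v x, 0 <= q u v x) /\ (forall u v, \sum_(x : X) q u v x = 1).

(* Conditional mutual information I(A;B|C) of a joint pmf J(a,b,c),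
   in nats, with the convention 0 log(...) = 0. *)
Definition cmi (A B C : finType) (J : A -> B -> C -> R) : R :=
  let Jc  := fun c => \sum_(a : A) \sum_(b : B) J a b c in
  let Jac := fun a c => \sum_(b : B) J a b c in
  let Jbc := fun b c => \sum_(a : A) J a b c in
  \sum_(a : A) \sum_(b : B) \sum_(c : C)
    (if J a b c == 0 then 0
     else J a b c * ln (J a b c * Jc c / (Jac a c * Jbc b c))).

Definition mi (A B : finType) (J : A -> B -> R) : R :=
  cmi (fun a b (_ : unit) => J a b).

Definition bc_region (det : bool) (X Y Z : finType) (W : X -> Y -> Z -> R)
  (R1 R2 : R) : Prop :=
  exists (U V : finType) (p : U -> V -> R) (q : U -> V -> X -> R),
    is_pmf2 p /\ is_cond_pmf q /\
    (det -> forall u v x, q u v x = 0 \/ q u v x = 1) /\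
    let P := fun u v x y z => p u v * q u v x * W x y z in
    let PUY := fun u y => \sum_(v : V) \sum_(x : X) \sum_(z : Z) P u v x y z in
    let PVZ := fun v z => \sum_(u : U) \sum_(x : X) \sum_(y : Y) P u v x y z in
    let PVZ_U := fun v z u => \sum_(x : X) \sum_(y : Y) P u v x y z in
    let PUY_V := fun u y v => \sum_(x : X) \sum_(z : Z) P u v x y z in
    [/\ R1 <= mi PUY,
        R2 <= mi PVZ,
        R1 + R2 <= mi PUY + cmi PVZ_U
      & R1 + R2 <= mi PVZ + cmi PUY_V].

End InfoTheory.

From mathcomp Require Import all_boot all_order all_algebra.
From mathcomp Require Import reals exp.
From mathcomp Require Import ring lra.
Set Implicit Arguments. Unset Strict Implicit. Unset Printing Implicit Defensive.
Import Order.TTheory GRing.Theory Num.Theory.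
Local Open Scope ring_scope.

(* Functional representation of the encoder.  Given p(u,v) and q(x|u,v), draw a
   codebook T = (T_u)_u of independent inputs T_u ~ q(.|u,v), and replace V by
   V' = (V,T) and X by the deterministic input T_U.  Summing out T gives back the
   original joint law of (U,V,X,Y,Z), so I(U;Y) does not change, while I(V';Z),
   I(V';Z|U) and I(U;Y|V') can only grow: the first two because V is a function
   of V', the last because T is independent of U given V.  Both monotonicity
   facts are instances of Gibbs' inequality. *)

Section Gibbs.
Variable R : realType.

Lemma ln_le_subr1 (x : R) : 0 < x -> ln x <= x - 1.
Proof. by move=> x0; have := @le_ln1Dx R (x - 1); rewrite subrKC; apply; lra. Qed.

Lemma sub_le_mul_ln_div (P Q : R) : 0 <= P -> 0 <= Q -> (P != 0 -> 0 < Q) ->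
  P - Q <= P * ln (P / Q).
Proof.
move=> P0 Q0 PQ; have [->|P_neq0] := eqVneq P 0; first by rewrite sub0r mul0r oppr_le0.
have Pp : 0 < P by rewrite lt0r P_neq0.
have Qp := PQ P_neq0.
have := ler_wpM2l P0 (ln_le_subr1 (divr_gt0 Qp Pp)).
have -> : P * (Q / P - 1) = Q - P by field; rewrite gt_eqF.
by rewrite -[P / Q]invf_div lnV ?posrE ?divr_gt0 //; lra.
Qed.

Lemma gibbs_ineq (I : finType) (P Q : I -> R) :
  (forall i, 0 <= P i) -> (forall i, 0 <= Q i) -> (forall i, P i != 0 -> 0 < Q i) ->
  \sum_i Q i <= \sum_i P i -> 0 <= \sum_i P i * ln (P i / Q i).
Proof.
move=> P0 Q0 PQ sumQP; apply: (@le_trans _ _ (\sum_i (P i - Q i))).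
  by rewrite sumrB subr_ge0.
by apply: ler_sum => i _; exact: sub_le_mul_ln_div (P0 i) (Q0 i) (PQ i).
Qed.

Lemma sum_normalized_le (I : finType) (F : I -> R) (m : R) :
  0 <= m -> \sum_i m * F i / \sum_j F j <= m.
Proof.
move=> m0; rewrite -mulr_suml -mulr_sumr.
have [->|S_neq0] := eqVneq (\sum_j F j) 0; first by rewrite invr0 mulr0.
by rewrite mulfK.
Qed.

Lemma psumr_gt0 (I : finType) (F : I -> R) i :
  (forall j, 0 <= F j) -> 0 < F i -> 0 < \sum_j F j.
Proof.
by move=> F0 Fi; rewrite (bigD1 i) //=; apply: (lt_le_trans Fi); rewrite lerDl sumr_ge0.
Qed.

Lemma sumr_pair (A T : finType) (F : (A * T)%type -> R) :
  \sum_p F p = \sum_a \sum_t F (a, t).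
Proof. by rewrite pair_bigA; apply: eq_bigr => -[]. Qed.

Lemma sumrB3 (I J K : finType) (F G : I -> J -> K -> R) :
  \sum_i \sum_j \sum_k F i j k - \sum_i \sum_j \sum_k G i j k =
  \sum_i \sum_j \sum_k (F i j k - G i j k).
Proof.
rewrite -sumrB; apply: eq_bigr => i _; rewrite -sumrB; apply: eq_bigr => j _.
by rewrite sumrB.
Qed.

End Gibbs.

Section Marginals.
Variables (R : realType) (A B C : finType) (J : A -> B -> C -> R).

Definition margC c := \sum_a \sum_b J a b c.
Definition margAC a c := \sum_b J a b c.
Definition margBC b c := \sum_a J a b c.
Definition cmi_ratio a b c := J a b c * margC c / (margAC a c * margBC b c).

Lemma cmiE : cmi J = \sum_a \sum_b \sum_c J a b c * ln (cmi_ratio a b c).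
Proof.
rewrite /cmi; do 3!apply: eq_bigr => ? _.
by case: eqP => // ->; rewrite mul0r.
Qed.

Hypothesis J0 : forall a b c, 0 <= J a b c.

Lemma margAC_gt0 a b c : 0 < J a b c -> 0 < margAC a c.
Proof. exact: psumr_gt0. Qed.

Lemma margBC_gt0 a b c : 0 < J a b c -> 0 < margBC b c.
Proof. exact: psumr_gt0. Qed.

Lemma margC_gt0 a b c : 0 < J a b c -> 0 < margC c.
Proof.
move=> Jp; apply: (@psumr_gt0 _ _ (margAC^~ c) a) (margAC_gt0 Jp) => a'.
exact: sumr_ge0.
Qed.

Lemma cmi_ratio_gt0 a b c : 0 < J a b c -> 0 < cmi_ratio a b c.
Proof.
move=> Jp; apply: divr_gt0; first by rewrite mulr_gt0 // (margC_gt0 Jp).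
by rewrite mulr_gt0 // ?(margAC_gt0 Jp) ?(margBC_gt0 Jp).
Qed.

End Marginals.

Section CmiMonotone.
Variable R : realType.

Lemma cmi_le_extend_fst (A T B C : finType) (J' : (A * T)%type -> B -> C -> R)
    (J : A -> B -> C -> R) :
  (forall a' b c, 0 <= J' a' b c) -> (forall a b c, J a b c = \sum_t J' (a, t) b c) ->
  cmi J <= cmi J'.
Proof.
move=> J'0 eJ.
have J0 a b c : 0 <= J a b c by rewrite eJ sumr_ge0.
have J_gt0 a' b c : 0 < J' a' b c -> 0 < J a'.1 b c.
  by case: a' => a t J'p; rewrite eJ (psumr_gt0 (F := fun t => J' (a, t) b c) _ J'p).
(* [Q] is the law [J'] would have if [T] and [B] were independent given [A, C]. *)
pose Q a' b c := margAC J' a' c * J a'.1 b c / margAC J a'.1 c.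
have Q_gt0 a' b c : 0 < J' a' b c -> 0 < Q a' b c.
  move=> J'p; have Jp := J_gt0 _ _ _ J'p.
  by rewrite divr_gt0 ?mulr_gt0 ?(margAC_gt0 J'0 J'p) ?(margAC_gt0 J0 Jp).
have log_gain a' b c : J' a' b c * ln (cmi_ratio J' a' b c)
    - J' a' b c * ln (cmi_ratio J a'.1 b c) = J' a' b c * ln (J' a' b c / Q a' b c).
  have [->|nz] := eqVneq (J' a' b c) 0; first by rewrite !mul0r subrr.
  have J'p : 0 < J' a' b c by rewrite lt0r nz J'0.
  have Jp := J_gt0 _ _ _ J'p.
  rewrite -mulrBr -ln_div ?posrE ?(cmi_ratio_gt0 J'0 J'p) ?(cmi_ratio_gt0 J0 Jp) //.
  have eC : margC J' c = margC J c.
    rewrite /margC sumr_pair; apply: eq_bigr => a _.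
    by rewrite exchange_big; apply: eq_bigr => b' _; rewrite eJ.
  have eBC : margBC J' b c = margBC J b c.
    by rewrite /margBC sumr_pair; apply: eq_bigr => a _; rewrite eJ.
  congr (_ * ln _); rewrite /cmi_ratio /Q eC eBC; field.
  by rewrite !gt_eqF ?(margAC_gt0 J'0 J'p) ?(margAC_gt0 J0 Jp) ?(margBC_gt0 J0 Jp)
    ?(margC_gt0 J0 Jp).
rewrite -subr_ge0 !cmiE.
have -> : \sum_a \sum_b \sum_c J a b c * ln (cmi_ratio J a b c) =
    \sum_a' \sum_b \sum_c J' a' b c * ln (cmi_ratio J a'.1 b c).
  rewrite sumr_pair; apply: eq_bigr => a _.
  under eq_bigr => b _ do under eq_bigr => c _ do rewrite eJ mulr_suml.
  under eq_bigr => b _ do rewrite exchange_big.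
  by rewrite exchange_big.
rewrite sumrB3; under eq_bigr => a' _ do under eq_bigr => b _ do
  under eq_bigr => c _ do rewrite log_gain.
apply: sumr_ge0 => a' _; rewrite exchange_big; apply: sumr_ge0 => c _.
apply: gibbs_ineq.
- by move=> b; apply: J'0.
- by move=> b; rewrite divr_ge0 ?mulr_ge0 ?sumr_ge0.
- by move=> b nz; apply: Q_gt0; rewrite lt0r nz J'0.
- exact/sum_normalized_le/sumr_ge0.
Qed.

(* The third hypothesis says that [A] and [T] are independent given [C]. *)
Lemma cmi_le_extend_cond (A B C T : finType) (J' : A -> B -> (C * T)%type -> R)
    (J : A -> B -> C -> R) :
  (forall a b c', 0 <= J' a b c') -> (forall a b c, J a b c = \sum_t J' a b (c, t)) ->
  (forall a c t, margAC J' a (c, t) * margC J c = margAC J a c * margC J' (c, t)) ->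
  cmi J <= cmi J'.
Proof.
move=> J'0 eJ indep.
have J0 a b c : 0 <= J a b c by rewrite eJ sumr_ge0.
have J_gt0 a b c' : 0 < J' a b c' -> 0 < J a b c'.1.
  by case: c' => c t J'p; rewrite eJ (psumr_gt0 (F := fun t => J' a b (c, t)) _ J'p).
(* [Q] is the law [J'] would have if [T] and [A] were independent given [B, C]. *)
pose Q a b c' := margBC J' b c' * J a b c'.1 / margBC J b c'.1.
have Q_gt0 a b c' : 0 < J' a b c' -> 0 < Q a b c'.
  move=> J'p; have Jp := J_gt0 _ _ _ J'p.
  by rewrite divr_gt0 ?mulr_gt0 ?(margBC_gt0 J'0 J'p) ?(margBC_gt0 J0 Jp).
have log_gain a b c' : J' a b c' * ln (cmi_ratio J' a b c')
    - J' a b c' * ln (cmi_ratio J a b c'.1) = J' a b c' * ln (J' a b c' / Q a b c').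
  have [->|nz] := eqVneq (J' a b c') 0; first by rewrite !mul0r subrr.
  have J'p : 0 < J' a b c' by rewrite lt0r nz J'0.
  have Jp := J_gt0 _ _ _ J'p.
  rewrite -mulrBr -ln_div ?posrE ?(cmi_ratio_gt0 J'0 J'p) ?(cmi_ratio_gt0 J0 Jp) //.
  have eC : margC J' c' = margAC J' a c' * margC J c'.1 / margAC J a c'.1.
    case: c' nz J'p Jp => c t _ _ Jp; rewrite indep [_ * margC _ _]mulrC mulfK //.
    by rewrite gt_eqF ?(margAC_gt0 J0 Jp).
  congr (_ * ln _); rewrite /cmi_ratio /Q eC; field.
  by rewrite !gt_eqF ?(margAC_gt0 J'0 J'p) ?(margBC_gt0 J'0 J'p) ?(margAC_gt0 J0 Jp)
    ?(margBC_gt0 J0 Jp) ?(margC_gt0 J0 Jp).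
rewrite -subr_ge0 !cmiE.
have -> : \sum_a \sum_b \sum_c J a b c * ln (cmi_ratio J a b c) =
    \sum_a \sum_b \sum_c' J' a b c' * ln (cmi_ratio J a b c'.1).
  do 2!apply: eq_bigr => ? _; rewrite sumr_pair; apply: eq_bigr => c _.
  by rewrite eJ mulr_suml.
rewrite sumrB3; under eq_bigr => a _ do under eq_bigr => b _ do
  under eq_bigr => c' _ do rewrite log_gain.
rewrite exchange_big; apply: sumr_ge0 => b _; rewrite exchange_big; apply: sumr_ge0 => c' _.
apply: gibbs_ineq.
- by move=> a; apply: J'0.
- by move=> a; rewrite divr_ge0 ?mulr_ge0 ?sumr_ge0.
- by move=> a nz; apply: Q_gt0; rewrite lt0r nz J'0.
- exact/sum_normalized_le/sumr_ge0.
Qed.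

End CmiMonotone.

Lemma marg_UV_joint (R : realType) (X Y Z U V : finType) (W : X -> Y -> Z -> R)
    (p : U -> V -> R) (q : U -> V -> X -> R) u v :
  (forall x, \sum_y \sum_z W x y z = 1) -> (forall u v, \sum_x q u v x = 1) ->
  \sum_y \sum_x \sum_z p u v * q u v x * W x y z = p u v.
Proof.
move=> W1 q1; rewrite exchange_big /=; transitivity (\sum_x p u v * q u v x).
  apply: eq_bigr => x _; rewrite -[RHS]mulr1 -(W1 x) mulr_sumr.
  by apply: eq_bigr => y _; rewrite mulr_sumr.
by rewrite -mulr_sumr q1 mulr1.
Qed.

Section DeterministicEncoder.
Variables (R : realType) (X Y Z U V : finType).
Variables (W : X -> Y -> Z -> R) (p : U -> V -> R) (q : U -> V -> X -> R).
Hypotheses (W_channel : is_bc_channel W) (p_pmf : is_pmf2 p) (q_cond : is_cond_pmf q).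

Local Notation codebook := {ffun U -> X}.

(* [p_det] is the law of (U, (V, T)); [q_det] reads the input off the codebook. *)
Definition codebook_prob v (t : codebook) := \prod_u q u v (t u).
Definition p_det u (vt : V * codebook) := p u vt.1 * codebook_prob vt.1 vt.2.
Definition q_det u (vt : V * codebook) x : R := (x == vt.2 u)%:R.

Lemma codebook_prob_ge0 v t : 0 <= codebook_prob v t.
Proof. by apply: prodr_ge0 => u _; apply: q_cond.1. Qed.

Lemma sum_codebook_prob_eval u v (f : X -> R) :
  \sum_t codebook_prob v t * f (t u) = \sum_x q u v x * f x.
Proof.
pose F u' x := q u' v x * (if u' == u then f x else 1).
transitivity (\prod_u' \sum_x F u' x); last first.
  rewrite (bigD1 u) //= /F eqxx [X in _ * X]big1 ?mulr1 // => u' /negbTE ->.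
  by under eq_bigr => ? _ do rewrite mulr1; apply: q_cond.2.
rewrite bigA_distr_bigA; apply: eq_bigr => t _; rewrite /F big_split /=; congr (_ * _).
by rewrite (bigD1 u) //= eqxx big1 ?mulr1 // => u' /negbTE ->.
Qed.

Lemma sum_codebook_prob v : \sum_t codebook_prob v t = 1.
Proof.
rewrite /codebook_prob -(bigA_distr_bigA (fun u x => q u v x)).
by apply: big1 => u _; apply: q_cond.2.
Qed.

Lemma p_det_pmf : is_pmf2 p_det.
Proof.
split=> [u [v t]|]; first by rewrite mulr_ge0 ?p_pmf.1 ?codebook_prob_ge0.
rewrite -p_pmf.2; apply: eq_bigr => u _; rewrite sumr_pair; apply: eq_bigr => v _.
by rewrite /p_det /= -mulr_sumr sum_codebook_prob mulr1.
Qed.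

Lemma sum_q_det u vt (f : X -> R) : \sum_x q_det u vt x * f x = f (vt.2 u).
Proof.
rewrite (bigD1 (vt.2 u)) //= /q_det eqxx mul1r big1 ?addr0 // => x /negbTE ->.
exact: mul0r.
Qed.

Lemma q_det_cond_pmf : is_cond_pmf q_det.
Proof.
split=> [u vt x|u vt]; first by rewrite ler0n.
by apply: etrans (sum_q_det u vt (fun=> 1)); apply: eq_bigr => x _; rewrite mulr1.
Qed.

Lemma q_det_01 u vt x : q_det u vt x = 0 \/ q_det u vt x = 1.
Proof. by rewrite /q_det; case: eqP; [right|left]. Qed.

Lemma sum_codebook_joint u v (S : finType) (G : X -> S -> R) :
  \sum_t \sum_x \sum_s p_det u (v, t) * q_det u (v, t) x * G x s =
  \sum_x \sum_s p u v * q u v x * G x s.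
Proof.
have factor (a : R) (b : X -> R) :
    \sum_x \sum_s a * b x * G x s = a * \sum_x b x * \sum_s G x s.
  by rewrite mulr_sumr; apply: eq_bigr => x _; rewrite mulrA mulr_sumr.
rewrite factor; under eq_bigr => t _ do rewrite factor sum_q_det /p_det /= -mulrA.
by rewrite -mulr_sumr (sum_codebook_prob_eval u v (fun x => \sum_s G x s)).
Qed.

Lemma joint_det_ge0 u vt x y z : 0 <= p_det u vt * q_det u vt x * W x y z.
Proof.
apply: mulr_ge0; first apply: mulr_ge0.
- exact: p_det_pmf.1.
- exact: q_det_cond_pmf.1.
- exact: W_channel.1.
Qed.

Lemma mi_UY_det :
  mi (fun u y => \sum_(vt : V * codebook) \sum_x \sum_z p_det u vt * q_det u vt x * W x y z) =
  mi (fun u y => \sum_v \sum_x \sum_z p u v * q u v x * W x y z).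
Proof.
congr mi; apply/boolp.funext => u; apply/boolp.funext => y; rewrite sumr_pair.
by apply: eq_bigr => v _; apply: (sum_codebook_joint u v (fun x z => W x y z)).
Qed.

Lemma mi_VZ_le_det :
  mi (fun v z => \sum_u \sum_x \sum_y p u v * q u v x * W x y z) <=
  mi (fun (vt : V * codebook) z => \sum_u \sum_x \sum_y p_det u vt * q_det u vt x * W x y z).
Proof.
apply: cmi_le_extend_fst => [vt z _|v z _].
  by do 3!apply: sumr_ge0 => ? _; apply: joint_det_ge0.
rewrite [RHS]exchange_big; apply: eq_bigr => u _.
by rewrite (sum_codebook_joint u v (fun x y => W x y z)).
Qed.

Lemma cmi_VZU_le_det :
  cmi (fun v z u => \sum_x \sum_y p u v * q u v x * W x y z) <=
  cmi (fun (vt : V * codebook) z u => \sum_x \sum_y p_det u vt * q_det u vt x * W x y z).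
Proof.
apply: cmi_le_extend_fst => [vt z u|v z u].
  by do 2!apply: sumr_ge0 => ? _; apply: joint_det_ge0.
by rewrite (sum_codebook_joint u v (fun x y => W x y z)).
Qed.

Lemma cmi_UYV_le_det :
  cmi (fun u y v => \sum_x \sum_z p u v * q u v x * W x y z) <=
  cmi (fun u y (vt : V * codebook) => \sum_x \sum_z p_det u vt * q_det u vt x * W x y z).
Proof.
apply: cmi_le_extend_cond => [u y vt|u y v|u v t].
- by do 2!apply: sumr_ge0 => ? _; apply: joint_det_ge0.
- by rewrite (sum_codebook_joint u v (fun x z => W x y z)).
have marg_det u' : margAC (fun u y (vt : V * codebook) =>
    \sum_x \sum_z p_det u vt * q_det u vt x * W x y z) u' (v, t) = p_det u' (v, t).
  exact: marg_UV_joint W_channel.2 q_det_cond_pmf.2.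
have marg u' : margAC (fun u y v => \sum_x \sum_z p u v * q u v x * W x y z) u' v = p u' v.
  exact: marg_UV_joint W_channel.2 q_cond.2.
rewrite /margC (eq_bigr _ (fun u' _ => marg u')) (eq_bigr _ (fun u' _ => marg_det u')).
by rewrite marg marg_det /p_det /= -mulr_suml mulrAC -mulrA.
Qed.

End DeterministicEncoder.

Theorem lemma3p2 (R : realType) (X Y Z : finType) (W : X -> Y -> Z -> R) :
  is_bc_channel W ->
  forall R1 R2 : R, bc_region false W R1 R2 <-> bc_region true W R1 R2.
Proof.
move=> W_channel R1 R2; split; last first.
  by case=> U [V [p [q [p_pmf [q_cond [_ rates]]]]]]; exists U, V, p, q.
case=> U [V [p [q [p_pmf [q_cond [_ [rUY rVZ rsumU rsumV]]]]]]].
exists U, (V * {ffun U -> X})%type, (p_det p q), (@q_det R X U V).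
split; first exact: p_det_pmf.
split; first exact: q_det_cond_pmf.
split; first by move=> _; apply: q_det_01.
have UY := mi_UY_det W p q_cond.
have VZ := mi_VZ_le_det W_channel p_pmf q_cond.
have VZU := cmi_VZU_le_det W_channel p_pmf q_cond.
have UYV := cmi_UYV_le_det W_channel p_pmf q_cond.
split; rewrite /= ?UY.
- exact: rUY.
- exact: le_trans rVZ VZ.
- exact: le_trans rsumU (lerD (lexx _) VZU).
- exact: le_trans rsumV (lerD VZ UYV).
Qed.
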